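(* Let $n>2$ and $r=n$. The depth-two claw $G_n$ with $n$ leaves is not $r$-EKR.
   Context: A depth-two claw with $n$ leaves, $G_n$, is the tree with a root $c$ adjacent to vertices $b_1,\dots,b_n$, where each $b_i$ is adjacent to exactly one further vertex $a_i$. An $r$-independent set is an independent set of size $r$. A family of sets is intersecting if every two members meet. A canonically intersecting family is the family of all $r$-independent sets containing a fixed vertex. A graph is $r$-EKR if the maximum size of an intersecting family of $r$-independent sets equals the maximum size of a canonically intersecting family. *)

From mathcomp Require Import all_boot.
Set Implicit Arguments. Unset Strict Implicit. Unset Printing Implicit Defensive.

(* A simple graph is given by a vertex finType T and a symmetric irreflexive
   adjacency relation e : rel T. *)
Section EKR.
Variables (T : finType) (e : rel T).

Definition independent (A : {set T}) : bool :=
  [forall x in A, forall y in A, ~~ e x y].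

Definition r_independent (r : nat) (A : {set T}) : bool :=
  independent A && (#|A| == r).

Definition intersecting (F : {set {set T}}) : bool :=
  [forall A in F, forall B in F, A :&: B != set0].

Definition family_of_r_indep (r : nat) (F : {set {set T}}) : bool :=
  [forall A in F, r_independent r A].

Definition star (r : nat) (v : T) : {set {set T}} :=
  [set A | r_independent r A & v \in A].

Definition max_intersecting (r : nat) : nat :=
  \max_(F : {set {set T}} | family_of_r_indep r F && intersecting F) #|F|.

Definition max_star (r : nat) : nat := \max_(v : T) #|star r v|.

Definition r_EKR (r : nat) : Prop := max_intersecting r = max_star r.
End EKR.

(* Depth-two claw G_n: vertices c (inl tt), b_i (inr (inl i)), a_i (inr (inr i)). *)
Definition claw_vertex (n : nat) : finType := (unit + ('I_n + 'I_n))%type.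

Definition claw_root {n : nat} : claw_vertex n := inl tt.
Definition claw_b {n : nat} (i : 'I_n) : claw_vertex n := inr (inl i).
Definition claw_a {n : nat} (i : 'I_n) : claw_vertex n := inr (inr i).

Definition claw_arc (n : nat) (x y : claw_vertex n) : bool :=
  match x, y with
  | inl _, inr (inl _) => true
  | inr (inl i), inr (inr j) => i == j
  | _, _ => false
  end.

Definition claw_adj (n : nat) : rel (claw_vertex n) :=
  fun x y => claw_arc x y || claw_arc y x.

From mathcomp Require Import all_boot zify.
Set Implicit Arguments. Unset Strict Implicit. Unset Printing Implicit Defensive.

(* The [n]-independent sets of the claw are the [2 ^ n] transversals of the
   pairs [{a_i, b_i}] and the [n] rooted sets [{c, a_1, ..., a_n} \ {a_j}].
   A star therefore has at most [2 ^ (n - 1) + n - 1] members (the star of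
   [a_i]).  Two transversals meet unless they are complementary, so any
   family choosing one transversal from each complementary pair, e.g. by an
   [a]-majority on three fixed coordinates, is intersecting and has size
   [2 ^ (n - 1)].  The majority rule puts two [a]'s in each chosen
   transversal, so each of them also meets every rooted set; adding the [n]
   rooted sets yields an intersecting family of size [2 ^ (n - 1) + n]. *)

Section IndependentSets.
Variables (T : finType) (e : rel T).

Lemma independentP (A : {set T}) :
  reflect {in A &, forall x y, ~~ e x y} (independent e A).
Proof.
apply: (iffP forall_inP) => [indA x y xA yA | indA x xA].
  exact: (forall_inP (indA x xA)).
by apply/forall_inP => y yA; apply: indA.
Qed.

Lemma intersectingP (F : {set {set T}}) :
  reflect {in F &, forall A B, A :&: B != set0} (intersecting F).
Proof.
apply: (iffP forall_inP) => [intF A B AF BF | intF A AF].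
  exact: (forall_inP (intF A AF)).
by apply/forall_inP => B BF; apply: intF.
Qed.

Lemma setI_neq0 (A B : {set T}) x : x \in A -> x \in B -> A :&: B != set0.
Proof. by move=> xA xB; apply/set0Pn; exists x; rewrite inE xA xB. Qed.

End IndependentSets.

Section SelfDual.
Variable I : finType.

Definition negf (f : {ffun I -> bool}) : {ffun I -> bool} := [ffun i => ~~ f i].

Lemma negfK : involutive negf.
Proof. by move=> f; apply/ffunP => i; rewrite !ffunE negbK. Qed.

Definition self_dual (P : pred {ffun I -> bool}) : Prop :=
  forall f, P (negf f) = ~~ P f.

Lemma card_self_dual P : self_dual P -> #|[set f | P f]| = 2 ^ #|I|.-1.
Proof.
move=> dualP; have := cardsC [set f | P f].
have <- : negf @^-1: [set f | P f] = ~: [set f | P f].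
  by apply/setP => f; rewrite !inE dualP.
rewrite card_preimset; last exact: inv_inj negfK.
rewrite card_ffun card_bool; case: #|I| => [|m]; rewrite ?expnS /=; lia.
Qed.

Lemma self_dual_agree P f g : self_dual P -> P f -> P g -> exists i, f i = g i.
Proof.
move=> dualP Pf Pg; have [i /eqP | fg] := pickP (fun i => f i == g i); first by exists i.
suff gE : g = negf f by move: Pg; rewrite gE dualP Pf.
by apply/ffunP => i; rewrite ffunE; case: (f i) (g i) (fg i) => [] [].
Qed.

Section Majority.
Variables i0 i1 i2 : I.

Definition majority3 (f : {ffun I -> bool}) : bool :=
  [|| f i0 && f i1, f i0 && f i2 | f i1 && f i2].

Lemma majority3_self_dual : self_dual majority3.
Proof. by move=> f; rewrite /majority3 !ffunE; case: (f i0) (f i1) (f i2) => [] [] []. Qed.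

Lemma majority3_true_off f j : i0 != i1 -> i0 != i2 -> i1 != i2 ->
  majority3 f -> exists2 k, k != j & f k.
Proof.
have two_true k1 k2 : k1 != k2 -> f k1 -> f k2 -> exists2 k, k != j & f k.
  move=> k12 fk1 fk2; case: (eqVneq k1 j) => [k1j | ]; last by exists k1.
  by exists k2; rewrite // -k1j eq_sym.
by move=> i01 i02 i12 /or3P[] /andP[]; apply: two_true.
Qed.

End Majority.
End SelfDual.

Section Claw.
Variable n : nat.
Notation V := (claw_vertex n).
Notation adj := (@claw_adj n).

Definition claw_transversal (f : {ffun 'I_n -> bool}) : {set V} :=
  [set x : V | match x with
               | inl _ => false | inr (inl i) => ~~ f i | inr (inr i) => f i end].

Definition claw_rooted (j : 'I_n) : {set V} :=
  [set x : V | match x with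
               | inl _ => true | inr (inl _) => false | inr (inr k) => k != j end].

Lemma claw_transversalE f :
  claw_transversal f = [set (if f i then claw_a i else claw_b i) | i : 'I_n].
Proof.
apply/setP => -[[]|[i|i]]; rewrite !inE /=.
- by apply/esym/imsetP => -[k _]; case: (f k).
- apply/idP/imsetP => [fi | [k _]]; first by exists i; rewrite ?(negbTE fi).
  by case fk: (f k) => // -[->]; rewrite fk.
- apply/idP/imsetP => [fi | [k _]]; first by exists i; rewrite ?fi.
  by case fk: (f k) => // -[->]; rewrite fk.
Qed.

Lemma card_claw_transversal f : #|claw_transversal f| = n.
Proof.
rewrite claw_transversalE card_imset ?card_ord // => i j.
by case: (f i) (f j) => [] [] [].
Qed.

Lemma card_claw_root_a (S : {set 'I_n}) : #|claw_root |: claw_a @: S| = #|S|.+1.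
Proof.
rewrite cardsU1 card_imset; last by move=> i j [].
by have /negPf-> : claw_root \notin claw_a @: S by apply/imsetP => -[].
Qed.

Lemma card_claw_rooted j : #|claw_rooted j| = n.
Proof.
have -> : claw_rooted j = claw_root |: claw_a @: [set~ j].
  apply/setP => -[[]|[i|i]]; rewrite !inE //=.
    by apply/esym/imsetP => -[].
  apply/idP/imsetP => [ij | [k]]; first by exists i; rewrite ?inE.
  by rewrite !inE => kj [->].
rewrite card_claw_root_a cardsC1 card_ord.
by case: n j => [[]|].
Qed.

Lemma claw_transversal_r_indep f : r_independent adj n (claw_transversal f).
Proof.
rewrite /r_independent card_claw_transversal eqxx andbT.
apply/independentP => -[[]|[i|i]] [[]|[j|j]]; rewrite !inE /claw_adj //=.
- by rewrite orbF => fi fj; apply: contraNN fi => /eqP ->.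
- by move=> fi fj; apply: contraNN fj => /eqP ->.
Qed.

Lemma claw_rooted_r_indep j : r_independent adj n (claw_rooted j).
Proof.
rewrite /r_independent card_claw_rooted eqxx andbT.
by apply/independentP => -[[]|[i|i]] [[]|[k|k]]; rewrite !inE.
Qed.

Lemma claw_r_indep_cases A : r_independent adj n A ->
  (exists f, A = claw_transversal f) \/ (exists j, A = claw_rooted j).
Proof.
case/andP => /independentP indA /eqP cardA.
have [rootA | rootNA] := boolP (claw_root \in A).
  have bNA i : claw_b i \notin A by apply: contraTN isT => /(indA _ _ rootA).
  have [j ajNA | allaA] := pickP (fun j => claw_a j \notin A).
    right; exists j; apply/eqP; rewrite eqEcard card_claw_rooted cardA leqnn andbT.
    apply/subsetP => -[[]|[i|i]] xA; rewrite inE //.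
      by case/negP: (bNA i).
    by apply: contraNneq ajNA => <-.
  have : claw_root |: claw_a @: setT \subset A.
    apply/subsetP => x; rewrite !inE => /orP[/eqP -> // | /imsetP[k _ ->]].
    exact/negbFE/allaA.
  by move/subset_leq_card; rewrite card_claw_root_a cardsT card_ord cardA ltnn.
left; exists [ffun i => claw_a i \in A]; apply/eqP.
rewrite eqEcard card_claw_transversal cardA leqnn andbT.
apply/subsetP => -[[]|[i|i]] xA; rewrite inE ?ffunE //.
  by case/negP: rootNA.
by apply: contraTN isT => /(indA _ _ xA); rewrite /claw_adj /= eqxx.
Qed.

Lemma card_claw_star_le v : #|star adj n v| <=
  #|[set f | v \in claw_transversal f]| + #|[set j | v \in claw_rooted j]|.
Proof.
pose T := claw_transversal @: [set f | v \in claw_transversal f].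
pose R := claw_rooted @: [set j | v \in claw_rooted j].
have /subset_leq_card/leq_trans-> // : star adj n v \subset T :|: R.
  apply/subsetP => X; rewrite inE => /andP[/claw_r_indep_cases[] [y ->] vX].
    by apply/setUP; left; apply: imset_f; rewrite inE.
  by apply/setUP; right; apply: imset_f; rewrite inE.
by apply: leq_trans (leq_card_setU _ _) _; apply: leq_add; apply: leq_imset_card.
Qed.

Lemma claw_max_star_le : max_star adj n <= 2 ^ n.-1 + n.-1.
Proof.
apply/bigmax_leqP => v _; apply: leq_trans (card_claw_star_le v) _.
case: v => [[]|[i|i]].
- rewrite (_ : [set f | _] = set0); last by apply/setP => f; rewrite !inE.
  rewrite cards0 (leq_trans (max_card _)) // card_ord.
  by have := expn_gt0 2 n.-1; lia.
- rewrite card_self_dual ?card_ord; last by move=> f; rewrite !inE ffunE.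
  rewrite (_ : [set j | _] = set0); last by apply/setP => j; rewrite !inE.
  by rewrite cards0 addn0 leq_addr.
- rewrite card_self_dual ?card_ord; last by move=> f; rewrite !inE ffunE.
  rewrite (_ : [set j | _] = [set~ i]); last by apply/setP => j; rewrite !inE eq_sym.
  by rewrite cardsC1 card_ord.
Qed.

Section IntersectingFamily.
Variable P : pred {ffun 'I_n -> bool}.
Hypothesis dualP : self_dual P.
Hypothesis P_true_off : forall f j, P f -> exists2 k, k != j & f k.

Definition claw_family : {set {set V}} :=
  claw_transversal @: [set f | P f] :|: claw_rooted @: setT.

Lemma claw_family_r_indep : family_of_r_indep adj n claw_family.
Proof.
apply/forall_inP => X; rewrite inE => /orP[] /imsetP[y _ ->].
  exact: claw_transversal_r_indep.
exact: claw_rooted_r_indep.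
Qed.

Lemma claw_family_intersecting : intersecting claw_family.
Proof.
have meet_rooted f j : P f -> claw_transversal f :&: claw_rooted j != set0.
  by case/(P_true_off j) => k kj fk; apply: (setI_neq0 (x := claw_a k)); rewrite inE.
apply/intersectingP => X Y; rewrite !inE.
case/orP=> /imsetP[f Pf ->]; case/orP=> /imsetP[g Pg ->].
all: move: Pf Pg; rewrite !inE => Pf Pg.
- have [k fgk] := self_dual_agree dualP Pf Pg.
  by apply: (setI_neq0 (x := if f k then claw_a k else claw_b k));
    case fk: (f k); rewrite inE /= -?fgk fk.
- exact: meet_rooted.
- by rewrite setIC; apply: meet_rooted.
- by apply: (setI_neq0 (x := claw_root)); rewrite inE.
Qed.

Lemma card_claw_family : #|claw_family| = #|[set f | P f]| + n.
Proof.
have transversal_inj : injective claw_transversal.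
  by move=> f g fg; apply/ffunP => i; move/setP/(_ (claw_a i)): fg; rewrite !inE.
have rooted_inj : injective claw_rooted.
  move=> j k jk; apply/eqP; move/setP/(_ (claw_a j)): jk.
  by rewrite !inE /= eqxx => /esym/negbFE.
rewrite cardsU !card_imset // cardsT card_ord.
suff -> : claw_transversal @: [set f | P f] :&: claw_rooted @: setT = set0.
  by rewrite cards0 subn0.
apply/setP => X; rewrite !inE.
by apply/andP => -[/imsetP[f _ ->] /imsetP[j _ /setP/(_ claw_root)]]; rewrite !inE.
Qed.

Lemma claw_max_intersecting_ge : #|[set f | P f]| + n <= max_intersecting adj n.
Proof.
rewrite -card_claw_family; apply: leq_bigmax_cond.
by rewrite claw_family_r_indep claw_family_intersecting.
Qed.

End IntersectingFamily.
End Claw.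

Theorem proposition9p4 (n : nat) : 2 < n -> ~ r_EKR (@claw_adj n) n.
Proof.
move=> n_gt2 ekr.
pose i0 : 'I_n := Ordinal (ltnW (ltnW n_gt2)).
pose i1 : 'I_n := Ordinal (ltnW n_gt2).
pose i2 : 'I_n := Ordinal n_gt2.
have maj_true_off f j : majority3 i0 i1 i2 f -> exists2 k, k != j & f k.
  exact: majority3_true_off.
have := claw_max_intersecting_ge (majority3_self_dual i0 i1 i2) maj_true_off.
rewrite card_self_dual ?card_ord; last exact: majority3_self_dual.
by have := claw_max_star_le n; rewrite -ekr; lia.
Qed.
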